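(* Let $q\ge5$. (i) The union of the $q+1$ $\Gamma$-planes and the $q^2+q$ $2_{\mathcal C}$-planes can be partitioned into $q+1$ pencils of planes such that each pencil consists of one $\Gamma$-plane and $q$ $2_{\mathcal C}$-planes and the axis of the pencil is a tangent to $\mathcal C$. (ii) Among $E_{n\Gamma}$-lines, only lines lying in $2_{\mathcal C}$-planes can intersect tangents; if $q\not\equiv0\pmod3$, $E_{n\Gamma}$-lines lying in $2_{\mathcal C}$-planes intersect tangents in $T$-points, and if $q\equiv0\pmod3$ they intersect tangents in $TO$-points. (iii) For every $E_{n\Gamma}$-line $\ell$, the number of $T$-points on $\ell$ equals the number of $2_{\mathcal C}$-planes through $\ell$ if $q\not\equiv0\pmod 3$, and the number of $TO$-points on $\ell$ equals the number of $2_{\mathcal C}$-planes through $\ell$ if $q\equiv0\pmod3$.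
   Context: Let $\mathbb F_q$ be the field of order $q$ and $\mathrm{PG}(3,q)$ the projective space with points $\mathbf P(x_0,x_1,x_2,x_3)$. For $t\in\mathbb F_q$ put $P(t)=\mathbf P(t^3,t^2,t,1)$, and $P(\infty)=\mathbf P(1,0,0,0)$; the twisted cubic is $\mathcal C=\{P(t):t\in\mathbb F_q\cup\{\infty\}\}$. The osculating plane at $P(t)$ is $x_0-3tx_1+3t^2x_2-t^3x_3=0$ ($t\in\mathbb F_q$) and $x_3=0$ at $P(\infty)$; these are the $\Gamma$-planes. The tangent at $P(t)$, $t\in\mathbb F_q$, is the line through $P(t)$ and $\mathbf P(3t^2,2t,1,0)$; at $P(\infty)$ it is the line through $\mathbf P(1,0,0,0),\mathbf P(0,1,0,0)$. A real chord joins two distinct points of $\mathcal C$; an imaginary chord joins $P(\tau),P(\tau^q)$, $\tau\in\mathbb F_{q^2}\setminus\mathbb F_q$; chords are real chords, tangents and imaginary chords. An axis is the intersection of two distinct osculating planes at points of $\mathcal C$, or of the osculating planes at conjugate points $P(\tau),P(\tau^q)$. An $E_{n\Gamma}$-line is a line with no point of $\mathcal C$, not contained in a $\Gamma$-plane, which is neither a chord nor an axis. A $2_{\mathcal C}$-plane is a plane containing exactly two points of $\mathcal C$. For $q\not\equiv0\pmod3$, $T$-points are points off $\mathcal C$ on a tangent; for $q\equiv0\pmod3$, $TO$-points are points off $\mathcal C$ on a tangent lying in exactly one $\Gamma$-plane. *)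

(* Subspaces of F^4 are represented by square matrices 'M[F]_4 (row spaces);
   points/lines/planes are the canonical representatives <<A>>%MS of rank 1/2/3. *)
From HB Require Import structures.
From mathcomp Require Import all_boot all_order all_algebra all_field.
Set Implicit Arguments. Unset Strict Implicit. Unset Printing Implicit Defensive.
Import Order.TTheory GRing.Theory.
Local Open Scope ring_scope.

Definition cvec (R : fieldType) (t : R) : 'rV[R]_4 :=
  \row_(i < 4) [:: t ^+ 3; t ^+ 2; t; 1]`_i.
Definition osc_col (R : fieldType) (t : R) : 'cV[R]_4 :=
  \col_(i < 4) [:: 1; - (3 * t); 3 * t ^+ 2; - t ^+ 3]`_i.
Definition tan_vec (R : fieldType) (t : R) : 'rV[R]_4 :=
  \row_(i < 4) [:: 3 * t ^+ 2; 2 * t; 1; 0]`_i.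

Section PG3.
Variable F : finFieldType.

Definition e_row (k : nat) : 'rV[F]_4 := \row_(i < 4) (i == k :> nat)%:R.

(* None stands for the parameter infinity *)
Definition cvecO (t : option F) : 'rV[F]_4 :=
  match t with Some s => cvec s | None => e_row 0 end.
Definition cpt (t : option F) : 'M[F]_4 := <<cvecO t>>%MS.
Definition curve : {set 'M[F]_4} := [set cpt t | t : option F].

Definition pts : {set 'M[F]_4} := [set <<v>>%MS | v : 'rV[F]_4 & v != 0].
Definition lines : {set 'M[F]_4} := [set <<A>>%MS | A : 'M[F]_4 & \rank A == 2].
Definition planes : {set 'M[F]_4} := [set <<A>>%MS | A : 'M[F]_4 & \rank A == 3].

(* Gamma-planes (osculating planes); at infinity the plane x3 = 0 *)
Definition gplane (t : option F) : 'M[F]_4 :=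
  <<kermx (match t with Some s => osc_col s | None => (e_row 3)^T end)>>%MS.
Definition gplanes : {set 'M[F]_4} := [set gplane t | t : option F].

Definition tanO (t : option F) : 'rV[F]_4 :=
  match t with Some s => tan_vec s | None => e_row 1 end.
Definition tangent (t : option F) : 'M[F]_4 := <<(cvecO t + tanO t)%MS>>%MS.
Definition tangents : {set 'M[F]_4} := [set tangent t | t : option F].

Definition real_chord (l : 'M[F]_4) : Prop :=
  exists s t : option F, s <> t /\ (l == cpt s + cpt t)%MS.
Definition is_tangent (l : 'M[F]_4) : Prop := exists t, (l == tangent t)%MS.
(* imaginary chord: joins P(tau), P(tau^q), tau in F_{q^2} \ F_q, taken in any
   extension field L of F (the line is extended to L by scalars) *)
Definition ext_mx (L : fieldExtType F) (A : 'M[F]_4) : 'M[L]_4 :=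
  map_mx (fun a : F => a%:A) A.
Definition imag_chord (q : nat) (l : 'M[F]_4) : Prop :=
  exists (L : fieldExtType F) (tau : L),
    [/\ tau ^+ (q ^ 2) = tau, (forall a : F, tau <> a%:A) &
        (ext_mx L l == cvec tau + cvec (tau ^+ q))%MS].
Definition is_chord (q : nat) (l : 'M[F]_4) : Prop :=
  real_chord l \/ is_tangent l \/ imag_chord q l.

Definition real_axis (l : 'M[F]_4) : Prop :=
  exists s t : option F, gplane s <> gplane t /\ (l == gplane s :&: gplane t)%MS.
Definition imag_axis (q : nat) (l : 'M[F]_4) : Prop :=
  exists (L : fieldExtType F) (tau : L),
    [/\ tau ^+ (q ^ 2) = tau, (forall a : F, tau <> a%:A) &
        (ext_mx L l == kermx (osc_col tau) :&: kermx (osc_col (tau ^+ q)))%MS].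
Definition is_axis (q : nat) (l : 'M[F]_4) : Prop := real_axis l \/ imag_axis q l.

Definition EnG_line (q : nat) (l : 'M[F]_4) : Prop :=
  [/\ l \in lines,
      (forall P, P \in curve -> ~~ (P <= l)%MS),
      (forall G, G \in gplanes -> ~~ (l <= G)%MS),
      ~ is_chord q l & ~ is_axis q l].

Definition twoC_planes : {set 'M[F]_4} :=
  [set pi in planes | #|[set P in curve | (P <= pi)%MS]| == 2].

Definition T_points : {set 'M[F]_4} :=
  [set P in pts | (P \notin curve) && [exists T in tangents, (P <= T)%MS]].
Definition TO_points : {set 'M[F]_4} :=
  [set P in T_points | #|[set G in gplanes | (P <= G)%MS]| == 1].

Definition pencil (l : 'M[F]_4) : {set 'M[F]_4} := [set pi in planes | (l <= pi)%MS].

End PG3.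

(* A plane with coefficient column c meets the twisted cubic in the points P(u)
   at which the binary cubic form f_c(u) = c_0 u^3 + c_1 u^2 + c_2 u + c_3
   vanishes, and it contains the tangent at P(t) iff t is a double root of f_c.
   A nonzero binary cubic has at most one double root t; its other roots are then
   either t alone, and c is proportional to the osculating plane at t, or a single
   further point; and if it has exactly two roots, one of them is double. Hence
   the planes through a tangent are its Gamma-plane and q 2_C-planes, and every
   2_C-plane contains exactly one tangent, which gives (i).
   An E_nGamma-line l meeting the tangent at P(t) spans with it a plane through
   that tangent which is no Gamma-plane, hence a 2_C-plane; so t |-> l /\ tangent(t)
   and t |-> <l, tangent(t)> biject the tangents met by l onto the T-points of l
   and onto the 2_C-planes through l, giving (ii) and (iii).
   In characteristic 3 the Gamma-planes are x_0 = t^3 x_3 and x_3 = 0; cubing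
   being bijective, these are all the planes through the line x_0 = x_3 = 0. A
   point of l on two Gamma-planes would lie on that line, and l would then lie in
   a Gamma-plane: every T-point of l is a TO-point. *)

From HB Require Import structures.
From mathcomp Require Import all_boot all_order all_algebra all_field.
From mathcomp Require Import fingroup pgroup abelian.
From mathcomp Require Import ring zify.
Set Implicit Arguments. Unset Strict Implicit. Unset Printing Implicit Defensive.
Import GRing.Theory.
Local Open Scope ring_scope.

Local Notation i0 := (@Ordinal 4 0 isT).
Local Notation i1 := (@Ordinal 4 1 isT).
Local Notation i2 := (@Ordinal 4 2 isT).
Local Notation i3 := (@Ordinal 4 3 isT).

(* [cubic a b d e] is the binary cubic form a X^3 + b X^2 Y + d X Y^2 + e Y^3
   on the projective line, [Some x] standing for (x : 1) and [None] for (1 : 0);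
   [cubic'] is its derivative in the affine chart around the point, so a point
   is a double root iff both vanish there. *)
Definition cubic (F : fieldType) (a b d e : F) (u : option F) : F :=
  if u is Some x then x ^+ 3 * a + x ^+ 2 * b + x * d + e else a.
Definition cubic' (F : fieldType) (a b d e : F) (u : option F) : F :=
  if u is Some x then 3 * x ^+ 2 * a + 2 * x * b + d else b.

Section BinaryCubic.
Variables (F : fieldType) (a b d e : F).
Hypothesis cubic_nz : ~ [/\ a = 0, b = 0, d = 0 & e = 0].
Local Notation f := (cubic a b d e).
Local Notation f' := (cubic' a b d e).

Lemma cubic_double_rootE x : f (Some x) = 0 -> f' (Some x) = 0 ->
  forall y, f (Some y) = (y - x) ^+ 2 * (a * y + b + 2 * a * x).
Proof.
move=> fx f'x y; have -> : f (Some y) =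
  f (Some x) + f' (Some x) * (y - x) + (y - x) ^+ 2 * (a * y + b + 2 * a * x).
  by rewrite /=; ring.
by rewrite fx f'x mul0r !add0r.
Qed.

Lemma double_root_lead2_neq0 x : f (Some x) = 0 -> f' (Some x) = 0 -> a = 0 -> b <> 0.
Proof.
move=> fx f'x a0 b0.
have d0 : d = 0 by move: f'x; rewrite /= a0 b0 !mulr0 !add0r.
by apply: cubic_nz; split=> //; move: fx; rewrite /= a0 b0 d0 !mulr0 !add0r.
Qed.

Lemma cubic_double_root_uniq s t :
  f s = 0 -> f' s = 0 -> f t = 0 -> f' t = 0 -> s = t.
Proof.
case: s => [x|] fs f's; case: t => [y|] // ft f't; last first.
- by case: (double_root_lead2_neq0 ft f't fs).
- by case: (double_root_lead2_neq0 fs f's ft).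
have [-> //|nxy] := eqVneq x y; have yx_neq0 : (y - x) ^+ 2 != 0.
  by rewrite expf_eq0 subr_eq0 eq_sym.
have Ky : a * y + b + 2 * a * x = 0.
  by apply/eqP; move: ft; rewrite (cubic_double_rootE fs f's) => /eqP;
    rewrite mulf_eq0 (negbTE yx_neq0).
have a0 : a = 0.
  have : f' (Some y) = f' (Some x) + 2 * (y - x) * (a * y + b + 2 * a * x)
                       + (y - x) ^+ 2 * a by rewrite /=; ring.
  rewrite f't f's Ky mulr0 !add0r => /esym/eqP.
  by rewrite mulf_eq0 (negbTE yx_neq0) => /eqP.
exfalso; apply: (double_root_lead2_neq0 fs f's a0).
by move: Ky; rewrite a0 !(mul0r, mulr0, add0r, addr0).
Qed.

Lemma cubic_double_root_other t u w : f t = 0 -> f' t = 0 ->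
  u != t -> w != t -> f u = 0 -> f w = 0 -> u = w.
Proof.
case: t => [x|] ft f't; last first.
  move: ft f't => /= a0 b0; case: u w => [y|] [y'|] //= _ _.
  rewrite a0 b0 !(mulr0, add0r) => fy fy'.
  have : d * (y - y') = 0 by rewrite -(subrr 0) -{1}fy -fy'; ring.
  move/eqP; rewrite mulf_eq0 subr_eq0 => /orP[/eqP d0|/eqP -> //].
  by case: cubic_nz; move: fy; rewrite d0 mulr0 add0r.
have other_root z : z != Some x -> f z = 0 ->
    if z is Some y then a * y + b + 2 * a * x = 0 else a = 0.
  case: z => [y|] // /eqP nyx; rewrite (cubic_double_rootE ft f't) => /eqP.
  rewrite mulf_eq0 expf_eq0 subr_eq0 => /orP[/andP[_ /eqP yx]|/eqP //].
  by case: nyx; rewrite yx.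
have b_eq0 y : a = 0 -> a * y + b + 2 * a * x = 0 -> b = 0.
  by move=> ->; rewrite !(mul0r, mulr0, add0r, addr0).
have no_lead2 := double_root_lead2_neq0 ft f't.
move=> nu nw /(other_root _ nu) Ku /(other_root _ nw) {nu nw}.
case: u w Ku => [y|] [y'|] //.
- move=> Ky Ky'; have : a * (y - y') = 0 by rewrite -(subrr 0) -{1}Ky -Ky'; ring.
  move/eqP; rewrite mulf_eq0 subr_eq0 => /orP[/eqP a0|/eqP -> //].
  by case: (no_lead2 a0 (b_eq0 _ a0 Ky)).
- by move=> Ky a0; case: (no_lead2 a0 (b_eq0 _ a0 Ky)).
- by move=> a0 /(b_eq0 _ a0) /(no_lead2 a0).
Qed.

Lemma cubic_triple_root t : f t = 0 -> f' t = 0 -> (forall u, f u = 0 -> u = t) ->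
  if t is Some x then [/\ b = - (3 * x) * a, d = 3 * x ^+ 2 * a & e = - x ^+ 3 * a]
  else [/\ a = 0, b = 0 & d = 0].
Proof.
case: t => [x|] ft f't roots_t; last first.
  move: ft f't => /= a0 b0; split=> //; apply/eqP/negPn/negP => d_neq0.
  have : f (Some (- e / d)) = 0 by rewrite /= a0 b0 !(mulr0, add0r) divfK // addNr.
  by move/roots_t.
have a_neq0 : a != 0 by apply/eqP => /(roots_t None).
have b_eq : b = - (3 * x) * a.
  pose z := - (b + 2 * a * x) / a.
  have az : a * z = - (b + 2 * a * x) by rewrite mulrCA divff // mulr1.
  have [zx] : Some z = Some x.
    by apply: roots_t; rewrite (cubic_double_rootE ft f't) az; ring.
  move: az; rewrite zx => /eqP; rewrite -addr_eq0 => /eqP ax.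
  by apply/eqP; rewrite -subr_eq0 -ax; apply/eqP; ring.
have d_eq : d = 3 * x ^+ 2 * a.
  by apply/eqP; rewrite -subr_eq0 -f't /= b_eq; apply/eqP; ring.
by split=> //; apply/eqP; rewrite -subr_eq0 -ft /= b_eq d_eq; apply/eqP; ring.
Qed.

Lemma cubic_two_roots u w : u != w -> f u = 0 -> f w = 0 ->
  (forall z, f z = 0 -> z = u \/ z = w) -> f' u = 0 \/ f' w = 0.
Proof.
have inf_case y : f None = 0 -> f (Some y) = 0 ->
    (forall z, f z = 0 -> z = None \/ z = Some y) -> f' None = 0 \/ f' (Some y) = 0.
  move=> a0 fy roots; rewrite /= in a0; have [b0|b_neq0] := eqVneq b 0; [by left | right].
  pose z := - d / b - y.
  have zy_root : b * (z + y) + d = 0 by rewrite subrK mulrC divfK // addNr.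
  have fz : f (Some z) = 0.
    have -> : f (Some z) = f (Some y) + (z - y) * (b * (z + y) + d).
      by rewrite /= a0; ring.
    by rewrite fy zy_root mulr0 addr0.
  case: (roots _ fz) => // -[zy].
  by rewrite -zy_root zy /= a0; ring.
case: u w => [x|] [y|] //; first last.
- by move=> _ fy fx roots; apply: inf_case.
- move=> _ fx fy roots; apply/or_comm/inf_case => // z /roots.
  by rewrite or_comm.
rewrite (inj_eq Some_inj) => nxy fx fy roots.
have a_neq0 : a != 0 by apply/eqP => a0; case: (roots None a0).
have xy_neq0 : x - y != 0 by rewrite subr_eq0.
(* f = (X - x) (X - y) (a X + k), and its third root - k / a must be x or y,
   where f' then vanishes. *)
pose k := b + a * (x + y).
have fE X : (x - y) * f (Some X) = (x - y) * ((X - x) * (X - y) * (a * X + k))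
    + (f (Some x) * (X - y) - f (Some y) * (X - x)).
  by rewrite /= /k; ring.
have f'E X : (x - y) * f' (Some X) = (x - y) * ((X - y) * (a * X + k)
    + (X - x) * (a * X + k) + (X - x) * (X - y) * a) + (f (Some x) - f (Some y)).
  by rewrite /= /k; ring.
pose z := - k / a.
have az : a * z + k = 0 by rewrite mulrCA divff // mulr1 addNr.
have fz : f (Some z) = 0.
  by apply: (mulfI xy_neq0); rewrite fE fx fy az !(mulr0, mul0r, subrr, addr0).
case: (roots _ fz) => -[zX]; move: az; rewrite zX => aX;
  [left | right]; apply: (mulfI xy_neq0);
  by rewrite f'E fx fy aX !(subrr, mulr0, mul0r, add0r, addr0).
Qed.

End BinaryCubic.

Lemma mulmx_rV_cV4 (R : pzSemiRingType) (r : 'rV[R]_4) (c : 'cV[R]_4) :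
  (r *m c) 0 0 = r 0 i0 * c i0 0 + r 0 i1 * c i1 0 + r 0 i2 * c i2 0 + r 0 i3 * c i3 0.
Proof.
rewrite mxE !big_ord_recr big_ord0 /= add0r.
by do ![congr (_ + _) | congr (_ * _) | congr (fun_of_matrix _ _ _) | apply: val_inj].
Qed.

Lemma col4P (T : Type) (c c' : 'cV[T]_4) : c i0 0 = c' i0 0 -> c i1 0 = c' i1 0 ->
  c i2 0 = c' i2 0 -> c i3 0 = c' i3 0 -> c = c'.
Proof.
move=> e0 e1 e2 e3; apply/matrixP => i j; rewrite ord1.
by case: i => -[|[|[|[|k]]]] ik //; rewrite (bool_irrelevance ik isT).
Qed.

Section RowSpaces.
Variables (F : fieldType) (n : nat).

Lemma eqmx_of_rank m p (A : 'M[F]_(m, n)) (B : 'M[F]_(p, n)) :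
  (A <= B)%MS -> \rank B = \rank A -> (A == B)%MS.
Proof. by move=> sAB rB; rewrite -(mxrank_leqif_eq sAB) rB. Qed.

Lemma sub_kermx_rV (v : 'rV[F]_n) (c : 'cV[F]_n) :
  (v <= kermx c)%MS = ((v *m c) 0 0 == 0).
Proof.
apply/sub_kermxP/eqP => [-> | vc0]; first by rewrite mxE.
by apply/matrixP => i j; rewrite !ord1 vc0 mxE.
Qed.

Lemma rank_kermx_col (c : 'cV[F]_n) : c != 0 -> \rank (kermx c) = n.-1.
Proof. by move=> c_neq0; rewrite mxrank_ker -mxrank_tr rank_rV trmx_eq0 c_neq0 subn1. Qed.

Lemma exists_kermx_col m (A : 'M[F]_(m, n)) :
  (\rank A < n)%N -> exists2 c : 'cV[F]_n, c != 0 & (A <= kermx c)%MS.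
Proof.
move=> rA; have : kermx A^T != 0.
  by rewrite -mxrank_eq0 mxrank_ker mxrank_tr subn_eq0 -ltnNge.
case/rowV0Pn => v /sub_kermxP vA v_neq0; exists v^T; first by rewrite trmx_eq0.
by apply/sub_kermxP; rewrite -[A]trmxK -trmx_mul vA trmx0.
Qed.

Lemma rank_adds_rank1 m p (A : 'M[F]_(m, n)) (P : 'M[F]_(p, n)) :
  \rank P = 1%N -> ~~ (P <= A)%MS -> \rank (A + P)%MS = (\rank A).+1.
Proof.
move=> rP nPA; have : (\rank (A :&: P) < \rank P)%N.
  rewrite (ltn_leqif (mxrank_leqif_eq (capmxSr A P))); apply: contra nPA.
  by case/andP=> _ /submx_trans; apply; apply: capmxSl.
by have := mxrank_sum_cap A P; rewrite rP; lia.
Qed.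

End RowSpaces.

Section Subspaces.
Variable F : finFieldType.
Implicit Types (P l pi : 'M[F]_4).

Lemma rank_pt P : P \in pts F -> \rank P = 1%N.
Proof. by case/imsetP=> v; rewrite inE => v_neq0 ->; rewrite genmxE rank_rV v_neq0. Qed.

Lemma rank_line l : l \in lines F -> \rank l = 2%N.
Proof. by case/imsetP=> A; rewrite inE => /eqP rA ->; rewrite genmxE. Qed.

Lemma rank_plane pi : pi \in planes F -> \rank pi = 3%N.
Proof. by case/imsetP=> A; rewrite inE => /eqP rA ->; rewrite genmxE. Qed.

Lemma genmx_pt (A : 'M[F]_4) : \rank A = 1%N -> <<A>>%MS \in pts F.
Proof.
move=> rA; have : A != 0 by rewrite -mxrank_eq0 rA.
case/rowV0Pn=> v vA v_neq0; apply/imsetP; exists v; first by rewrite inE.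
by apply/esym/genmxP; apply: eqmx_of_rank; rewrite // rank_rV v_neq0 rA.
Qed.

Lemma genmx_line (A : 'M[F]_4) : \rank A = 2%N -> <<A>>%MS \in lines F.
Proof. by move=> rA; apply/imsetP; exists A; rewrite ?inE ?rA. Qed.

Lemma genmx_plane (A : 'M[F]_4) : \rank A = 3%N -> <<A>>%MS \in planes F.
Proof. by move=> rA; apply/imsetP; exists A; rewrite ?inE ?rA. Qed.

Lemma plane_kermx pi : pi \in planes F ->
  exists2 c : 'cV[F]_4, c != 0 & (pi == kermx c)%MS.
Proof.
move=> /rank_plane rpi; have [|c c_neq0 pic] := exists_kermx_col (A := pi).
  by rewrite rpi.
by exists c => //; rewrite eqmx_of_rank // rank_kermx_col.
Qed.

Lemma plane_sub_eq pi pi' : pi \in planes F -> pi' \in planes F ->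
  (pi <= pi')%MS -> pi = pi'.
Proof.
move=> piP pi'P sub; have genmx_id_plane X : X \in planes F -> <<X>>%MS = X.
  by case/imsetP=> A _ ->; rewrite genmx_id.
rewrite -(genmx_id_plane pi piP) -(genmx_id_plane pi' pi'P); apply/genmxP.
by apply: eqmx_of_rank; rewrite // !rank_plane.
Qed.

End Subspaces.

Section TwistedCubic.
Variable F : finFieldType.
Implicit Types (c : 'cV[F]_4) (s t u w : option F).

Definition cform c := cubic (c i0 0) (c i1 0) (c i2 0) (c i3 0).
Definition cform' c := cubic' (c i0 0) (c i1 0) (c i2 0) (c i3 0).

Lemma cform_nz c : c != 0 -> ~ [/\ c i0 0 = 0, c i1 0 = 0, c i2 0 = 0 & c i3 0 = 0].
Proof. by move=> /eqP c_neq0 [e0 e1 e2 e3]; apply: c_neq0; apply: col4P; rewrite mxE. Qed.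

Lemma cvecO_mulmx u c : (cvecO u *m c) 0 0 = cform c u.
Proof.
case: u => [x|]; rewrite mulmx_rV_cV4 !mxE /=;
  by rewrite !(mulr0, mul0r, mulr1, mul1r, addr0, add0r).
Qed.

Lemma tanO_mulmx t c : (tanO t *m c) 0 0 = cform' c t.
Proof.
case: t => [x|]; rewrite mulmx_rV_cV4 !mxE /=;
  by rewrite !(mulr0, mul0r, mulr1, mul1r, addr0, add0r).
Qed.

Lemma cpt_sub_kermx u c : (cpt u <= kermx c)%MS = (cform c u == 0).
Proof. by rewrite genmxE sub_kermx_rV cvecO_mulmx. Qed.

Lemma tangent_sub_kermx t c :
  (tangent t <= kermx c)%MS = (cform c t == 0) && (cform' c t == 0).
Proof. by rewrite genmxE addsmx_sub !sub_kermx_rV cvecO_mulmx tanO_mulmx. Qed.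

Definition oscO t : 'cV[F]_4 :=
  if t is Some s then osc_col s else (e_row F 3)^T.

Lemma gplaneE t : gplane t = <<kermx (oscO t)>>%MS.
Proof. by case: t. Qed.

Lemma cform_oscO s u : (cform (oscO s) u == 0) = (u == s).
Proof.
case: s u => [s|] [x|]; rewrite /cform /= !mxE /= ?(mulr0, add0r, oner_eq0, eqxx) //.
have -> : x ^+ 3 * 1 + x ^+ 2 * - (3 * s) + x * (3 * s ^+ 2) + - s ^+ 3 = (x - s) ^+ 3.
  by ring.
by rewrite expf_eq0 subr_eq0.
Qed.

Lemma cform'_oscO s : cform' (oscO s) s = 0.
Proof. by case: s => [s|]; rewrite /cform' /= !mxE //=; ring. Qed.

Lemma oscO_neq0 s : oscO s != 0.
Proof.
by apply/eqP => /(congr1 (fun c => c (if s is Some _ then i0 else i3) 0));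
  case: s => [s|]; rewrite !mxE /= => /eqP; rewrite oner_eq0.
Qed.

Lemma cpt_in_curve u : cpt u \in curve F.
Proof. exact: imset_f. Qed.

Lemma gplane_in_gplanes u : gplane u \in gplanes F.
Proof. exact: imset_f. Qed.

Lemma cpt_sub_gplane u s : (cpt u <= gplane s)%MS = (u == s).
Proof. by rewrite gplaneE genmxE cpt_sub_kermx cform_oscO. Qed.

Lemma cpt_sub_tangent t : (cpt t <= tangent t)%MS.
Proof. by rewrite !genmxE addsmxSl. Qed.

Lemma tangent_sub_gplane t s : (tangent t <= gplane s)%MS = (t == s).
Proof.
apply/idP/eqP => [ts | <-].
  by apply/eqP; rewrite -cpt_sub_gplane (submx_trans (cpt_sub_tangent t)).
by rewrite gplaneE genmxE tangent_sub_kermx cform_oscO cform'_oscO !eqxx.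
Qed.

Lemma cpt_inj : injective (@cpt F).
Proof. by move=> u w Euw; apply/eqP; rewrite -cpt_sub_gplane Euw cpt_sub_gplane. Qed.

Lemma tangent_inj : injective (@tangent F).
Proof.
by move=> t s Ets; apply/eqP; rewrite -tangent_sub_gplane Ets tangent_sub_gplane.
Qed.

Lemma gplane_plane t : gplane t \in planes F.
Proof. by rewrite gplaneE genmx_plane // rank_kermx_col ?oscO_neq0. Qed.

Lemma cvecO_neq0 u : cvecO u != 0.
Proof.
by apply/eqP => /(congr1 (fun v : 'rV[F]_4 => v 0 (if u is Some _ then i3 else i0)));
  case: u => [x|]; rewrite !mxE /= => /eqP; rewrite oner_eq0.
Qed.

Lemma rank_cpt u : \rank (cpt u) = 1%N.
Proof. by rewrite genmxE rank_rV cvecO_neq0. Qed.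

Lemma rank_tangent t : \rank (tangent t) = 2%N.
Proof.
have tanO_neq0 : tanO t != 0.
  by apply/eqP => /(congr1 (fun v : 'rV[F]_4 => v 0 (if t is Some _ then i2 else i1)));
    case: t => [x|]; rewrite !mxE /= => /eqP; rewrite oner_eq0.
rewrite genmxE addsmxC rank_adds_rank1 ?rank_rV ?cvecO_neq0 ?tanO_neq0 //.
apply/sub_rVP => -[k].
move/(congr1 (fun v : 'rV[F]_4 => v 0 (if t is Some _ then i3 else i0))).
by case: t {tanO_neq0} => [x|]; rewrite !mxE /= mulr0 => /eqP; rewrite oner_eq0.
Qed.

Lemma tangent_line t : tangent t \in lines F.
Proof. by apply: genmx_line; have := rank_tangent t; rewrite genmxE. Qed.

End TwistedCubic.

Section Planes.
Variable F : finFieldType.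
Implicit Types (pi : 'M[F]_4) (s t u w : option F).

Definition curve_params pi := [set u | (cpt u <= pi)%MS].

Lemma card_curve_params pi : #|[set P in curve F | (P <= pi)%MS]| = #|curve_params pi|.
Proof.
rewrite -(card_imset _ (@cpt_inj F)); congr #|pred_of_set _|.
apply/setP => P; rewrite inE; apply/andP/imsetP.
  by case=> /imsetP[u _ ->] upi; exists u; rewrite ?inE.
by case=> u + ->; rewrite inE => upi; split; first exact: imset_f.
Qed.

Lemma twoC_planeE pi :
  (pi \in twoC_planes F) = (pi \in planes F) && (#|curve_params pi| == 2%N).
Proof. by rewrite inE card_curve_params. Qed.

Lemma curve_params_gplane t : curve_params (gplane t) = [set t].
Proof. by apply/setP => u; rewrite !inE cpt_sub_gplane. Qed.

Lemma plane_tangent_uniq pi s t : pi \in planes F ->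
  (tangent s <= pi)%MS -> (tangent t <= pi)%MS -> s = t.
Proof.
move=> /plane_kermx[c /cform_nz c_nz /eqmxP pic].
rewrite !pic !tangent_sub_kermx => /andP[/eqP fs /eqP f's] /andP[/eqP ft /eqP f't].
exact: (cubic_double_root_uniq c_nz fs f's ft f't).
Qed.

Lemma plane_tangent_cases pi t : pi \in planes F -> (tangent t <= pi)%MS ->
  pi = gplane t \/ exists2 u, u != t & curve_params pi = [set t; u].
Proof.
move=> piP tpi; have [c c_neq0 /eqmxP pic] := plane_kermx piP.
have c_nz := cform_nz c_neq0.
move: (tpi); rewrite pic tangent_sub_kermx => /andP[/eqP ft /eqP f't].
have paramsE : curve_params pi = [set u | cform c u == 0].
  by apply/setP => u; rewrite !inE pic cpt_sub_kermx.
case: (boolP [exists u, (cform c u == 0) && (u != t)]).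
  case/existsP=> u /andP[/eqP fu ut]; right; exists u => //.
  apply/setP => w; rewrite paramsE !inE.
  have [-> | wt] := eqVneq w t; first by rewrite ft eqxx.
  apply/eqP/eqP => [fw | ->] //.
  exact: (cubic_double_root_other c_nz ft f't wt ut fw fu).
move=> no_other; left.
have roots_t w : cform c w = 0 -> w = t.
  move=> fw; apply/eqP; apply: contraNT no_other => wt.
  by apply/existsP; exists w; rewrite fw eqxx.
have c_eq : c = (if t is Some _ then c i0 0 else c i3 0) *: oscO t.
  have := cubic_triple_root ft f't roots_t.
  case: t {tpi ft f't roots_t no_other} => [x|] triple; apply: col4P; rewrite !mxE /=;
    by case: triple => E1 E2 E3; rewrite ?E1 ?E2 ?E3; ring.
have gpi : (gplane t <= pi)%MS.
  rewrite pic gplaneE genmxE c_eq; apply/sub_kermxP.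
  by rewrite -scalemxAr mulmx_ker scaler0.
by apply: esym; apply: plane_sub_eq gpi; rewrite ?gplane_plane.
Qed.

Lemma plane_two_params_tangent pi : pi \in planes F -> #|curve_params pi| = 2%N ->
  exists t, (tangent t <= pi)%MS.
Proof.
move=> piP /eqP/cards2P[u [w [uw paramsE]]].
have [c c_neq0 /eqmxP pic] := plane_kermx piP.
have root v : (cform c v == 0) = (v \in [set u; w]).
  by rewrite -paramsE inE pic cpt_sub_kermx.
have /eqP fu : cform c u == 0 by rewrite root !inE eqxx.
have /eqP fw : cform c w == 0 by rewrite root !inE eqxx orbT.
have roots z : cform c z = 0 -> z = u \/ z = w.
  by move/eqP; rewrite root !inE => /orP[] /eqP; [left | right].
have [f'u | f'w] := cubic_two_roots uw fu fw roots.
  by exists u; rewrite pic tangent_sub_kermx fu eqxx; apply/eqP.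
by exists w; rewrite pic tangent_sub_kermx fw eqxx; apply/eqP.
Qed.

End Planes.

Section Pencils.
Variable F : finFieldType.
Implicit Types (pi : 'M[F]_4) (t u w : option F).

Lemma pencil_tangent_gplanes t : pencil (tangent t) :&: gplanes F = [set gplane t].
Proof.
apply/setP => pi; rewrite !inE; apply/andP/eqP => [[/andP[_ tpi] /imsetP[s _ pis]] | ->].
  by move: tpi; rewrite pis tangent_sub_gplane => /eqP ->.
by rewrite gplane_plane tangent_sub_gplane eqxx; split=> //; apply: imset_f.
Qed.

Lemma pencil_tangent_cases pi t :
  pi \in pencil (tangent t) -> pi = gplane t \/ pi \in twoC_planes F.
Proof.
rewrite inE => /andP[piP tpi].
case: (plane_tangent_cases piP tpi) => [-> | [u ut paramsE]]; [by left | right].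
by rewrite twoC_planeE piP paramsE cards2 (eq_sym t) ut.
Qed.

Lemma twoC_plane_tangent pi :
  pi \in twoC_planes F -> exists t, pi \in pencil (tangent t).
Proof.
rewrite twoC_planeE => /andP[piP /eqP two].
by have [t tpi] := plane_two_params_tangent piP two; exists t; rewrite inE piP.
Qed.

Definition tangent_join t u := <<(tangent t + cpt u)%MS>>%MS.

Lemma tangent_sub_join t u : (tangent t <= tangent_join t u)%MS.
Proof. by rewrite /tangent_join genmxE addsmxSl. Qed.

Lemma cpt_sub_join t u : (cpt u <= tangent_join t u)%MS.
Proof. by rewrite /tangent_join genmxE addsmxSr. Qed.

Lemma tangent_join_plane t u : u != t -> tangent_join t u \in planes F.
Proof.
move=> ut; rewrite genmx_plane // rank_adds_rank1 ?rank_tangent ?rank_cpt //.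
apply: contra ut => /submx_trans ut; rewrite -cpt_sub_gplane ut //.
by rewrite tangent_sub_gplane.
Qed.

Lemma curve_params_tangent_join t u : u != t ->
  curve_params (tangent_join t u) = [set t; u].
Proof.
move=> ut; have uP : u \in curve_params (tangent_join t u) by rewrite inE cpt_sub_join.
case: (plane_tangent_cases (tangent_join_plane ut) (tangent_sub_join t u)).
  by move=> piE; move: uP; rewrite piE curve_params_gplane inE (negbTE ut).
by case=> v vt paramsE; move: uP; rewrite paramsE !inE (negbTE ut) => /eqP ->.
Qed.

Lemma pencil_tangent_twoC t :
  pencil (tangent t) :&: twoC_planes F = tangent_join t @: [set~ t].
Proof.
apply/setP => pi; rewrite in_setI [pi \in pencil _]inE; apply/idP/imsetP.
  case/andP=> /andP[piP tpi] piC.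
  case: (plane_tangent_cases piP tpi) => [piE | [u ut paramsE]].
    by move: piC; rewrite twoC_planeE piE curve_params_gplane cards1 andbF.
  exists u; first by rewrite !inE.
  apply/esym/plane_sub_eq => //; first exact: tangent_join_plane.
  have : u \in curve_params pi by rewrite paramsE !inE eqxx orbT.
  by rewrite inE /tangent_join genmxE addsmx_sub tpi.
case=> u; rewrite in_setC1 => ut ->.
rewrite tangent_join_plane // tangent_sub_join twoC_planeE tangent_join_plane //.
by rewrite curve_params_tangent_join // cards2 (eq_sym t) ut.
Qed.

Lemma card_pencil_tangent_twoC t :
  #|pencil (tangent t) :&: twoC_planes F| = #|F|.
Proof.
rewrite pencil_tangent_twoC card_in_imset ?cardsC1 ?card_option //.
move=> u w; rewrite !inE => ut wt /(congr1 (@curve_params F)).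
rewrite !curve_params_tangent_join // => /setP/(_ w).
by rewrite !inE eqxx orbT (negbTE wt) => /eqP.
Qed.

Lemma tangent_pencils_partition :
  partition [set pencil T | T in tangents F] (gplanes F :|: twoC_planes F).
Proof.
have pencil_mem t : pencil (tangent t) \in [set pencil T | T in tangents F].
  by do 2!apply: imset_f.
apply/and3P; split.
- apply/eqP/setP => pi; apply/bigcupP/setUP.
    case=> _ /imsetP[_ /imsetP[t _ ->] ->] /pencil_tangent_cases[-> | ?]; last by right.
    by left; apply: imset_f.
  case=> [/imsetP[t _ ->] | /twoC_plane_tangent[t tpi]];
    exists (pencil (tangent t)) => //.
  by rewrite inE gplane_plane tangent_sub_gplane eqxx.
- apply/trivIsetP => _ _ /imsetP[_ /imsetP[s _ ->] ->] /imsetP[_ /imsetP[t _ ->] ->] st.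
  rewrite -setI_eq0; apply/eqP/setP => pi; rewrite !inE.
  apply/negbTE/negP => /andP[/andP[piP spi] /andP[_ tpi]].
  by move: st; rewrite (plane_tangent_uniq piP spi tpi) eqxx.
- apply/imsetP => -[_ /imsetP[t _ ->]] /setP/(_ (gplane t)).
  by rewrite !inE gplane_plane tangent_sub_gplane eqxx.
Qed.

End Pencils.

Lemma char3_of_card (F : finFieldType) : (3 %| #|F|)%N -> (3 : F) = 0.
Proof.
move=> dvd3; have [p p_pr pcharFp] := finPcharP F.
have /pgroupP/(_ 3 isT) := abelem_pgroup (fin_ring_pchar_abelem pcharFp).
rewrite cardsT => /(_ dvd3); rewrite inE => /eqP p3.
by move: pcharFp; rewrite -p3 => /pcharf0.
Qed.

Section Char3.
Variable F : finFieldType.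
Hypothesis char3 : (3 : F) = 0.

Lemma cube_inj : injective (fun x : F => x ^+ 3).
Proof.
move=> x y /= xy3; apply/eqP; rewrite -subr_eq0.
have : (x - y) ^+ 3 == 0.
  have -> : (x - y) ^+ 3 = x ^+ 3 - y ^+ 3 - 3 * (x ^+ 2 * y - x * y ^+ 2) by ring.
  by rewrite xy3 subrr char3 mul0r subr0.
by rewrite expf_eq0.
Qed.

Lemma sub_gplane_char3 (v : 'rV[F]_4) u : (v <= gplane u)%MS =
  if u is Some a then v 0 i0 == a ^+ 3 * v 0 i3 else v 0 i3 == 0.
Proof.
rewrite gplaneE genmxE sub_kermx_rV mulmx_rV_cV4; case: u => [a|]; rewrite !mxE /=.
  by rewrite char3 !(mul0r, mulr0, oppr0, addr0, mulr1) mulrN subr_eq0 mulrC.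
by rewrite !(mulr0, add0r, mulr1).
Qed.

Lemma pt_on_two_gplanes_char3 (v : 'rV[F]_4) s t : s != t ->
  (v <= gplane s)%MS -> (v <= gplane t)%MS -> v 0 i0 = 0 /\ v 0 i3 = 0.
Proof.
rewrite !sub_gplane_char3; case: s t => [a|] [b|] // st /eqP vs /eqP vt.
- have : (a ^+ 3 - b ^+ 3) * v 0 i3 = 0 by rewrite mulrBl -vs -vt subrr.
  move/eqP; rewrite mulf_eq0 subr_eq0 => /orP[/eqP/cube_inj ab | /eqP v3].
    by move: st; rewrite ab eqxx.
  by split=> //; rewrite vs v3 mulr0.
- by split=> //; rewrite vs vt mulr0.
- by split=> //; rewrite vt vs mulr0.
Qed.

Lemma common_gplane_char3 (v w : 'rV[F]_4) : v 0 i0 = 0 -> v 0 i3 = 0 ->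
  exists u, (v <= gplane u)%MS && (w <= gplane u)%MS.
Proof.
move=> v0 v3; have [w3 | w3_neq0] := eqVneq (w 0 i3) 0.
  by exists None; rewrite !sub_gplane_char3 v3 w3 eqxx.
have [cbrt _ cbrtK] := injF_bij cube_inj.
exists (Some (cbrt (w 0 i0 / w 0 i3))).
by rewrite !sub_gplane_char3 cbrtK divfK // v0 v3 mulr0 !eqxx.
Qed.

End Char3.

Section LinesMeetingTangents.
Variable F : finFieldType.
Implicit Types (P pi : 'M[F]_4) (s t : option F).

Lemma tangent_meet_uniq P s t : P != 0 ->
  (P <= tangent s)%MS -> (P <= tangent t)%MS -> s = t.
Proof.
move=> P_neq0 Ps Pt; have : (\rank (tangent s + tangent t) < 4)%N.
  have : (0 < \rank (tangent s :&: tangent t))%N.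
    rewrite lt0n mxrank_eq0; apply: contraNneq P_neq0 => cap0.
    by rewrite -submx0 -cap0 sub_capmx Ps Pt.
  by have := mxrank_sum_cap (tangent s) (tangent t); rewrite !rank_tangent; lia.
case/exists_kermx_col=> c c_neq0; rewrite addsmx_sub => /andP[sc tc].
have piP : <<kermx c>>%MS \in planes F by rewrite genmx_plane ?rank_kermx_col.
by apply: (plane_tangent_uniq piP); rewrite genmxE.
Qed.

Variable l : 'M[F]_4.
Hypothesis l_line : l \in lines F.
Hypothesis l_off_curve : forall P, P \in curve F -> ~~ (P <= l)%MS.
Hypothesis l_off_gplanes : forall G, G \in gplanes F -> ~~ (l <= G)%MS.

Definition tangents_met := [set t | \rank (l :&: tangent t) != 0%N].

Lemma tangents_met_rank t : t \in tangents_met ->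
  \rank (l :&: tangent t) = 1%N /\ \rank (l + tangent t) = 3%N.
Proof.
rewrite inE => cap_neq0; have rl := rank_line l_line; have rT := rank_tangent t.
suff cap_neq2 : \rank (l :&: tangent t) != 2%N.
  have := mxrank_sum_cap l (tangent t); have := mxrankS (capmxSl l (tangent t)).
  by rewrite rl rT; lia.
apply/eqP => cap2; move/negP: (l_off_curve (cpt_in_curve t)); apply.
have lT : (l <= tangent t)%MS.
  have /andP[_ /submx_trans-> //] : (l :&: tangent t == l)%MS.
    by apply: eqmx_of_rank; rewrite ?capmxSl // rl cap2.
  exact: capmxSr.
have /andP[_ Tl] : (l == tangent t)%MS by apply: eqmx_of_rank; rewrite // rl rT.
exact: submx_trans (cpt_sub_tangent t) Tl.
Qed.

Lemma mem_tangents_met P t : P \in pts F -> (P <= l)%MS -> (P <= tangent t)%MS ->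
  t \in tangents_met.
Proof.
move=> /rank_pt rP Pl Pt; have sPc : (P <= l :&: tangent t)%MS by rewrite sub_capmx Pl Pt.
by rewrite inE -lt0n; have := mxrankS sPc; rewrite rP.
Qed.

Lemma T_point_on_line P t : P \in pts F -> (P <= l)%MS -> (P <= tangent t)%MS ->
  P \in T_points F.
Proof.
move=> PP Pl Pt; rewrite inE PP /=; apply/andP; split.
  by apply/negP => /l_off_curve; rewrite Pl.
by apply/existsP; exists (tangent t); rewrite Pt andbT imset_f.
Qed.

Lemma T_points_on_line :
  [set P in T_points F | (P <= l)%MS] =
  (fun t => <<l :&: tangent t>>%MS) @: tangents_met.
Proof.
apply/setP => P; rewrite inE; apply/idP/imsetP.
  case/andP; rewrite inE => /and3P[PP _ /existsP[_ /andP[/imsetP[t _ ->] Pt]]] Pl.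
  have tm := mem_tangents_met PP Pl Pt; exists t => //.
  have [r1 _] := tangents_met_rank tm; case/imsetP: PP => v; rewrite inE => v_neq0 Pv.
  have vP : (v <= P)%MS by rewrite Pv genmxE.
  rewrite Pv; apply/genmxP/eqmx_of_rank; last by rewrite r1 rank_rV v_neq0.
  by rewrite sub_capmx (submx_trans vP Pl) (submx_trans vP Pt).
case=> t tm ->; have [r1 _] := tangents_met_rank tm.
have Pl : (<<l :&: tangent t>> <= l)%MS by rewrite genmxE capmxSl.
have Pt : (<<l :&: tangent t>> <= tangent t)%MS by rewrite genmxE capmxSr.
by rewrite Pl andbT (T_point_on_line (genmx_pt r1) Pl Pt).
Qed.

Lemma card_T_points_on_line :
  #|[set P in T_points F | (P <= l)%MS]| = #|tangents_met|.
Proof.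
rewrite T_points_on_line card_in_imset // => s t sm tm Est.
have [r1 _] := tangents_met_rank sm.
apply: (@tangent_meet_uniq <<l :&: tangent s>>%MS).
- by rewrite -mxrank_eq0 genmxE r1.
- by rewrite genmxE capmxSr.
- by rewrite Est genmxE capmxSr.
Qed.

Lemma line_tangent_twoC t : t \in tangents_met ->
  <<(l + tangent t)%MS>>%MS \in twoC_planes F.
Proof.
move=> /tangents_met_rank[_ r3]; have piP := genmx_plane r3.
have : <<(l + tangent t)%MS>>%MS \in pencil (tangent t).
  by rewrite inE piP genmxE addsmxSr.
case/pencil_tangent_cases => // piE; case/negP: (l_off_gplanes (gplane_in_gplanes t)).
by rewrite -piE genmxE addsmxSl.
Qed.

Lemma twoC_planes_through_line :
  [set pi in twoC_planes F | (l <= pi)%MS] =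
  (fun t => <<(l + tangent t)%MS>>%MS) @: tangents_met.
Proof.
apply/setP => pi; rewrite inE; apply/idP/imsetP; last first.
  by case=> t tm ->; rewrite line_tangent_twoC // genmxE addsmxSl.
case/andP=> piC lpi; have [t] := twoC_plane_tangent piC; rewrite inE => /andP[piP tpi].
have ltpi : (l + tangent t <= pi)%MS by rewrite addsmx_sub lpi.
have tm : t \in tangents_met.
  have := mxrankS ltpi; have := mxrank_sum_cap l (tangent t).
  by rewrite inE (rank_plane piP) (rank_line l_line) rank_tangent; lia.
have [_ r3] := tangents_met_rank tm.
by exists t => //; apply/esym/plane_sub_eq; rewrite ?genmx_plane ?genmxE.
Qed.

Lemma card_twoC_planes_through_line :
  #|[set pi in twoC_planes F | (l <= pi)%MS]| = #|tangents_met|.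
Proof.
rewrite twoC_planes_through_line card_in_imset // => s t sm _ Est.
have [_ r3] := tangents_met_rank sm.
apply: (plane_tangent_uniq (genmx_plane r3)); first by rewrite genmxE addsmxSr.
by rewrite Est genmxE addsmxSr.
Qed.

Section Char3.
Hypothesis char3 : (3 : F) = 0.

Lemma pt_gplane_uniq_char3 P s t : P \in pts F -> (P <= l)%MS ->
  (P <= gplane s)%MS -> (P <= gplane t)%MS -> s = t.
Proof.
case/imsetP=> v; rewrite inE => v_neq0 ->.
have vv : (v <= <<v>>)%MS by rewrite genmxE.
move=> /(submx_trans vv) vl /(submx_trans vv) vs /(submx_trans vv) vt.
have [// | st] := eqVneq s t; have [v0 v3] := pt_on_two_gplanes_char3 char3 st vs vt.
have /row_subPn[i wv] : ~~ (l <= v)%MS.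
  by apply: contraTN isT => /mxrankS; rewrite (rank_line l_line) rank_rV v_neq0.
have [u /andP[vu wu]] := common_gplane_char3 char3 (row i l) v0 v3.
have /andP[_ lvw] : ((v + row i l)%MS == l)%MS.
  apply: eqmx_of_rank; first by rewrite addsmx_sub vl row_sub.
  have w_neq0 : row i l != 0 by apply/eqP => w0; move: wv; rewrite w0 sub0mx.
  by rewrite (rank_line l_line) rank_adds_rank1 ?rank_rV ?v_neq0 ?w_neq0.
case/negP: (l_off_gplanes (gplane_in_gplanes u)).
by apply: submx_trans lvw _; rewrite addsmx_sub vu wu.
Qed.

Lemma T_point_on_line_TO_char3 P : P \in T_points F -> (P <= l)%MS ->
  P \in TO_points F.
Proof.
move=> PT Pl; rewrite inE PT /=; move: PT.
rewrite inE => /and3P[PP _ /existsP[_ /andP[/imsetP[t _ ->] Pt]]].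
have Pgt : (P <= gplane t)%MS by rewrite (submx_trans Pt) ?tangent_sub_gplane.
apply/cards1P; exists (gplane t); apply/setP => G; rewrite !inE.
apply/andP/eqP => [[/imsetP[s _ ->] Ps] | ->]; last by rewrite gplane_in_gplanes.
by rewrite (pt_gplane_uniq_char3 PP Pl Ps Pgt).
Qed.

Lemma TO_points_on_line_char3 :
  [set P in TO_points F | (P <= l)%MS] = [set P in T_points F | (P <= l)%MS].
Proof.
apply/setP => P; apply/setIdP/setIdP => [[/setIdP[] //] | [PT Pl]].
by split=> //; apply: T_point_on_line_TO_char3.
Qed.

End Char3.

End LinesMeetingTangents.

Theorem lemma3p3 (F : finFieldType) (q : nat) :
  #|F| = q -> (5 <= q)%N ->
  (* (i) *)
  (exists A : {set 'M[F]_4},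
     [/\ #|A| = q.+1,
         (forall a, a \in A -> a \in lines F /\ is_tangent a),
         partition [set pencil a | a in A] (gplanes F :|: twoC_planes F) &
         (forall a, a \in A ->
            #|pencil a :&: gplanes F| = 1%N /\ #|pencil a :&: twoC_planes F| = q)])
  /\
  (* (ii) *)
  ((forall l T P, EnG_line q l -> T \in tangents F -> P \in pts F ->
       (P <= l)%MS -> (P <= T)%MS ->
       exists pi, pi \in twoC_planes F /\ (l <= pi)%MS)
   /\ (forall l T P, EnG_line q l -> (exists pi, pi \in twoC_planes F /\ (l <= pi)%MS) ->
       T \in tangents F -> P \in pts F -> (P <= l)%MS -> (P <= T)%MS ->
       (if (q %% 3 == 0)%N then P \in TO_points F else P \in T_points F)))
  /\
  (* (iii) *)
  (forall l, EnG_line q l ->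
     (if (q %% 3 == 0)%N
      then #|[set P in TO_points F | (P <= l)%MS]|
      else #|[set P in T_points F | (P <= l)%MS]|)
     = #|[set pi in twoC_planes F | (l <= pi)%MS]|).
Proof.
move=> <- _; split.
  exists (tangents F); split.
  - by rewrite card_imset ?card_option //; apply: tangent_inj.
  - move=> _ /imsetP[t _ ->]; split; first exact: tangent_line.
    by exists t; rewrite !submx_refl.
  - exact: tangent_pencils_partition.
  - move=> _ /imsetP[t _ ->].
    by rewrite pencil_tangent_gplanes cards1 card_pencil_tangent_twoC.
split; first split.
- move=> l _ P [l_line l_off_curve l_off_gplanes _ _] /imsetP[t _ ->] PP Pl Pt.
  exists <<(l + tangent t)%MS>>%MS; rewrite genmxE addsmxSl; split=> //.
  exact: (line_tangent_twoC l_line l_off_curve l_off_gplanes (mem_tangents_met PP Pl Pt)).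
- move=> l _ P [l_line l_off_curve l_off_gplanes _ _] _ /imsetP[t _ ->] PP Pl Pt.
  have PT := T_point_on_line l_off_curve PP Pl Pt.
  case: ifP => // /char3_of_card char3.
  exact: (T_point_on_line_TO_char3 l_line l_off_gplanes char3 PT Pl).
- move=> l [l_line l_off_curve l_off_gplanes _ _].
  rewrite card_twoC_planes_through_line // -(card_T_points_on_line l_line l_off_curve).
  by case: ifP => // /char3_of_card char3; rewrite TO_points_on_line_char3.
Qed.
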